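(* The linear span $G^{00}$ of all operators $\bar\Xi^{\lambda_1}_{\lambda_1}\otimes f^{\dot I}_{\dot I}\otimes\Xi^{\lambda_2}_{\lambda_2}$, $\bar\Xi^{\lambda}_{\lambda}\otimes l^{\dot I}_{\dot I}$, $r^{\dot I}_{\dot I}\otimes\Xi^{\lambda}_{\lambda}$ and $\sigma^{\dot I}_{\dot I}$ ($\dot I$ any sequence, $\lambda,\lambda_1,\lambda_2\in\{1,\dots,\Lambda_F\}$) is a Cartan subalgebra of $\hat{G}_{\Lambda,\Lambda_F}$, i.e. a nilpotent subalgebra equal to its own normalizer in $\hat{G}_{\Lambda,\Lambda_F}$ (and these spanning operators are linearly dependent).
   Context: Fix positive integers $\Lambda,\Lambda_F$. A sequence $\dot I=i_1\cdots i_a$ is a finite, possibly empty, sequence of integers in $\{1,\dots,\Lambda\}$; juxtaposition denotes concatenation and $\delta^{\dot I}_{\dot J}$ is $1$ if $\dot I=\dot J$ and $0$ otherwise (similarly for integers). Let $\mathcal{T}_o$ be the complex vector space with basis the symbols $\bar\phi^{\lambda_1}\otimes s^{\dot K}\otimes\phi^{\lambda_2}$, $1\le\lambda_1,\lambda_2\le\Lambda_F$, $\dot K$ any sequence. For all sequences $\dot I,\dot J$ and all $\lambda_i\in\{1,\dots,\Lambda_F\}$ define linear operators on $\mathcal{T}_o$ (each written as a single symbol): first kind: $\bar\Xi^{\lambda_1}_{\lambda_2}\otimes f^{\dot I}_{\dot J}\otimes\Xi^{\lambda_3}_{\lambda_4}(\bar\phi^{\lambda_5}\otimes s^{\dot K}\otimes\phi^{\lambda_6})=\delta^{\lambda_5}_{\lambda_2}\delta^{\dot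 K}_{\dot J}\delta^{\lambda_6}_{\lambda_4}\,\bar\phi^{\lambda_1}\otimes s^{\dot I}\otimes\phi^{\lambda_3}$; second kind: $\bar\Xi^{\lambda_1}_{\lambda_2}\otimes l^{\dot I}_{\dot J}(\bar\phi^{\lambda_3}\otimes s^{\dot K}\otimes\phi^{\lambda_4})=\delta^{\lambda_3}_{\lambda_2}\sum_{\dot K_1\dot K_2=\dot K}\delta^{\dot K_1}_{\dot J}\,\bar\phi^{\lambda_1}\otimes s^{\dot I\dot K_2}\otimes\phi^{\lambda_4}$; third kind: $r^{\dot I}_{\dot J}\otimes\Xi^{\lambda_1}_{\lambda_2}(\bar\phi^{\lambda_3}\otimes s^{\dot K}\otimes\phi^{\lambda_4})=\delta^{\lambda_4}_{\lambda_2}\sum_{\dot K_1\dot K_2=\dot K}\delta^{\dot K_2}_{\dot J}\,\bar\phi^{\lambda_3}\otimes s^{\dot K_1\dot I}\otimes\phi^{\lambda_1}$; fourth kind: $\sigma^{\dot I}_{\dot J}(\bar\phi^{\lambda_1}\otimes s^{\dot K}\otimes\phi^{\lambda_2})=\sum_{\dot K_1\dot K_2\dot K_3=\dot K}\delta^{\dot K_2}_{\dot J}\,\bar\phi^{\lambda_1}\otimes s^{\dot K_1\dot I\dot K_3}\otimes\phi^{\lambda_2}$; sums run over all ways to write $\dot K$ as a concatenation of possibly empty sequences. The open string algebra $\hat{G}_{\Lambda,\Lambda_F}$ is the complex Lie algebra (commutator bracket) of operators on $\mathcal{T}_o$ spanned by all operators of these four kinds. *)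

From HB Require Import structures.
From mathcomp Require Import all_boot all_order all_algebra.
From mathcomp Require Import finmap.
From mathcomp Require Import monalg.
From mathcomp Require Import complex.
From mathcomp Require Import reals.

Set Implicit Arguments.
Unset Strict Implicit.
Unset Printing Implicit Defensive.

Import Order.TTheory GRing.Theory Num.Theory.
Local Open Scope ring_scope.

Section OpenString.

(* C is the field of scalars; L = Lambda, LF = Lambda_F.
   Letters {1..Lambda} are represented by 'I_L (shifted by one),
   flavour indices {1..Lambda_F} by 'I_LF. *)
Variables (C : fieldType) (L LF : nat).

(* basis symbol  phibar^{l1} (x) s^K (x) phi^{l2}  is  (l1, K, l2) *)
Definition basis := ('I_LF * seq 'I_L * 'I_LF)%type.

Definition To := {malg C[basis]}.

Definition bvec (b : basis) : To := << b >>.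

Definition extend (g : basis -> To) (v : To) : To :=
  \sum_(k <- msupp v) v@_k *: g k.

Definition splits2 (K : seq 'I_L) : seq (seq 'I_L * seq 'I_L) :=
  [seq (take n K, drop n K) | n <- iota 0 (size K).+1].

Definition splits3 (K : seq 'I_L) : seq (seq 'I_L * seq 'I_L * seq 'I_L) :=
  flatten [seq [seq (p.1, q.1, q.2) | q <- splits2 p.2] | p <- splits2 K].

(* labels of the four kinds of generators (a sum type, so that it is
   an eqType):
   inl (inl (l1, l2, I, J, l3, l4)) = Xibar^{l1}_{l2} (x) f^I_J (x) Xi^{l3}_{l4}
   inl (inr (l1, l2, I, J))         = Xibar^{l1}_{l2} (x) l^I_J
   inr (inl (I, J, l1, l2))         = r^I_J (x) Xi^{l1}_{l2}
   inr (inr (I, J))                 = sigma^I_J                              *)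
Definition gen : Type :=
  (('I_LF * 'I_LF * seq 'I_L * seq 'I_L * 'I_LF * 'I_LF)
   + ('I_LF * 'I_LF * seq 'I_L * seq 'I_L))
  + ((seq 'I_L * seq 'I_L * 'I_LF * 'I_LF) + (seq 'I_L * seq 'I_L)).

Definition gen_basis (g : gen) (b : basis) : To :=
  let: (m1, K, m2) := b in
  match g with
  | inl (inl (l1, l2, Is, Js, l3, l4)) =>
      ((m1 == l2) && (K == Js) && (m2 == l4))%:R *: bvec (l1, Is, l3)
  | inl (inr (l1, l2, Is, Js)) =>
      ((m1 == l2))%:R *:
        \sum_(p <- splits2 K) (p.1 == Js)%:R *: bvec (l1, Is ++ p.2, m2)
  | inr (inl (Is, Js, l1, l2)) =>
      ((m2 == l2))%:R *:
        \sum_(p <- splits2 K) (p.2 == Js)%:R *: bvec (m1, p.1 ++ Is, l1)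
  | inr (inr (Is, Js)) =>
      \sum_(p <- splits3 K) (p.1.2 == Js)%:R *: bvec (m1, p.1.1 ++ Is ++ p.2, m2)
  end.

Definition act (g : gen) : To -> To := extend (gen_basis g).

Definition is_diag (g : gen) : bool :=
  match g with
  | inl (inl (l1, l2, Is, Js, l3, l4)) => [&& l1 == l2, Is == Js & l3 == l4]
  | inl (inr (l1, l2, Is, Js)) => (l1 == l2) && (Is == Js)
  | inr (inl (Is, Js, l1, l2)) => (Is == Js) && (l1 == l2)
  | inr (inr (Is, Js)) => Is == Js
  end.

Definition comb (s : seq (C * gen)) (v : To) : To :=
  \sum_(x <- s) x.1 *: act x.2 v.

Definition inG (A : To -> To) : Prop :=
  exists s : seq (C * gen), forall v, A v = comb s v.

Definition inG00 (A : To -> To) : Prop :=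
  exists s : seq (C * gen), all is_diag (map snd s) /\ forall v, A v = comb s v.

Definition bracket (A B : To -> To) : To -> To := fun v => A (B v) - B (A v).

Fixpoint nested_bracket (n : nat) (x : nat -> To -> To) : To -> To :=
  match n with
  | 0 => x 0%N
  | k.+1 => bracket (x k.+1) (nested_bracket k x)
  end.

End OpenString.

(* Every operator of G^{00} maps each basis vector  phibar^{l1} (x) s^K (x) phi^{l2}
   to a multiple of itself: a diagonal generator can only replace an occurrence
   of a sequence I in K by I itself.  Hence G^{00} consists of simultaneously
   diagonal operators, so it is abelian and in particular nilpotent.
   Conversely, an off-diagonal generator never has a nonzero diagonal matrix
   coefficient.  If A normalizes G^{00}, then [A, P_b] is diagonal for the
   projection P_b = Xibar^{l1}_{l1} (x) f^K_K (x) Xi^{l2}_{l2} onto b, and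
   evaluating it at b shows that b is an eigenvector of A; so A is diagonal and
   coincides with the diagonal part of any expression of A in the generators.
   Finally, sum_l Xibar^l_l (x) l^{}_{} and sum_l r^{}_{} (x) Xi^l_l both act
   as the identity, which gives a linear dependence in G^{00}. *)

From HB Require Import structures.
From mathcomp Require Import all_boot all_order all_algebra.
From mathcomp Require Import finmap monalg complex reals.
Import Order.TTheory GRing.Theory Num.Theory.
Local Open Scope ring_scope.

Lemma catsI (T : Type) (s : seq T) : injective (cat s).
Proof. by elim: s => // x s IHs s1 s2 [/IHs]. Qed.

Lemma catIs (T : Type) (s : seq T) : injective (cat^~ s).
Proof. by move=> s1 s2 /(congr1 rev); rewrite !rev_cat => /catsI /(can_inj revK). Qed.

Section OpenStringOperators.
Set Implicit Arguments.
Unset Strict Implicit.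

Variables (C : fieldType) (L LF : nat).
Local Notation To := (To C L LF).
Local Notation basis := (basis L LF).
Local Notation gen := (gen L LF).
Local Notation bvec := (@bvec C L LF).
Local Notation act := (@act C L LF).
Local Notation comb := (@comb C L LF).

Lemma mcoeff_bvec b k : (bvec b)@_k = (b == k)%:R.
Proof. by rewrite mcoeffU; case: eqP. Qed.

Lemma mcoeffZ_bvec c b : (c *: bvec b : To)@_b = c.
Proof. by rewrite mcoeffZ mcoeff_bvec eqxx mulr1. Qed.

Lemma monalgU_bvec c b : << c *g b >> = c *: bvec b :> To.
Proof. by apply/malgP => k; rewrite mcoeffU mcoeffZ mcoeff_bvec mulr_natr. Qed.

Lemma scaler_comm (a c : C) (v : To) : a *: (c *: v) = c *: (a *: v).
Proof. by rewrite !scalerA (mulrC a). Qed.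

Lemma linear_bvec_eq (f g : {linear To -> To}) :
  (forall b, f (bvec b) = g (bvec b)) -> f =1 g.
Proof.
move=> fg v; rewrite (monalgE v) !linear_sum; apply: eq_bigr => k _.
by rewrite monalgU_bvec (linearZZ f) (linearZZ g) fg.
Qed.

Lemma extendEw (e : basis -> To) v (d : {fset basis}) : (msupp v `<=` d)%fset ->
  extend e v = \sum_(k <- d) v@_k *: e k.
Proof.
move=> le; rewrite /extend (big_fset_incl _ le) // => k _ /mcoeff_outdom ->.
by rewrite scale0r.
Qed.

Lemma extend_is_linear (e : basis -> To) : linear (extend e).
Proof.
move=> a v w; pose d := (msupp v `|` msupp w `|` msupp (a *: v + w))%fset.
have := fsubset_refl d; rewrite {1}/d !fsubUset => /andP [/andP [dv dw] daw].
rewrite (extendEw e dv) (extendEw e dw) (extendEw e daw).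
rewrite scaler_sumr -big_split; apply: eq_bigr => k _.
by rewrite mcoeffD mcoeffZ scalerDl scalerA.
Qed.

Lemma extend_bvec (e : basis -> To) b : extend e (bvec b) = e b.
Proof. by rewrite /extend msuppU oner_eq0 big_seq_fset1 mcoeffUU scale1r. Qed.

Lemma act_bvec g b : act g (bvec b) = gen_basis C g b.
Proof. exact: extend_bvec. Qed.

Lemma comb_is_linear s : linear (comb s).
Proof.
move=> a v w; rewrite /comb scaler_sumr -big_split; apply: eq_bigr => x _.
by rewrite /act extend_is_linear scalerDr scaler_comm.
Qed.

HB.instance Definition _ s :=
  GRing.isLinear.Build C To To *:%R (comb s) (comb_is_linear s).

Lemma comb_bvec_eq s t :
  (forall b, comb s (bvec b) = comb t (bvec b)) -> comb s =1 comb t.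
Proof. exact: linear_bvec_eq. Qed.

Lemma comb_nil v : comb [::] v = 0.
Proof. exact: big_nil. Qed.

Lemma comb_cat (s t : seq (C * gen)) v : comb (s ++ t) v = comb s v + comb t v.
Proof. exact: big_cat. Qed.

Definition bvec_multiple b (w : To) := exists c, w = c *: bvec b.

Definition diagonal (f : To -> To) := forall b, bvec_multiple b (f (bvec b)).

Lemma bvec_multipleE b w : bvec_multiple b w -> w = w@_b *: bvec b.
Proof. by case=> c ->; rewrite mcoeffZ_bvec. Qed.

Lemma diagonal_comm (f g : {linear To -> To}) :
  diagonal f -> diagonal g -> forall v, f (g v) = g (f v).
Proof.
move=> df dg; apply: (@linear_bvec_eq (f \o g) (g \o f)) => b /=.
have [cf fb] := df b; have [cg gb] := dg b.
rewrite gb (linearZZ f) fb (linearZZ g) gb; exact: scaler_comm.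
Qed.

Section BvecMultiple.
Variable b : basis.

Lemma bvec_multiple_bvec : bvec_multiple b (bvec b).
Proof. by exists 1; rewrite scale1r. Qed.

Lemma bvec_multipleZ a w : bvec_multiple b w -> bvec_multiple b (a *: w).
Proof. by case=> c ->; exists (a * c); rewrite scalerA. Qed.

Lemma bvec_multiple_natZ (P : bool) w :
  (P -> bvec_multiple b w) -> bvec_multiple b (P%:R *: w).
Proof.
case: P => [/(_ isT) /(bvec_multipleZ 1%:R) //|_].
by exists 0; rewrite !scale0r.
Qed.

Lemma bvec_multiple_sum (I : eqType) (r : seq I) (F : I -> To) :
  (forall i, i \in r -> bvec_multiple b (F i)) ->
  bvec_multiple b (\sum_(i <- r) F i).
Proof.
move=> Fb; rewrite big_seq; elim/big_ind: _ => [|_ _ [c1 ->] [c2 ->]|i /Fb //].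
  by exists 0; rewrite scale0r.
by exists (c1 + c2); rewrite scalerDl.
Qed.

Lemma mcoeff_bvec_neq b' : b' != b -> (bvec b')@_b = 0.
Proof. by rewrite mcoeff_bvec => /negbTE ->. Qed.

Lemma mcoeff_natZ_eq0 (P : bool) (w : To) :
  (P -> w@_b = 0) -> (P%:R *: w : To)@_b = 0.
Proof. by rewrite mcoeffZ; case: P => [/(_ isT) ->|_]; rewrite ?mulr0 ?mul0r. Qed.

Lemma mcoeff_sum_eq0 (I : eqType) (r : seq I) (P : pred I) (F : I -> To) :
  (forall i, i \in r -> P i -> (F i)@_b = 0) -> (\sum_(i <- r | P i) F i)@_b = 0.
Proof.
move=> Fb; rewrite big_seq_cond; elim/big_ind: _ => [|w1 w2 e1 e2|i /andP [/Fb]] //.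
  exact: mcoeff0.
by rewrite mcoeffD e1 e2 addr0.
Qed.

End BvecMultiple.

Lemma mem_splits2_cat (K : seq 'I_L) p : p \in splits2 K -> p.1 ++ p.2 = K.
Proof. by case/mapP => n _ ->; rewrite cat_take_drop. Qed.

Lemma mem_splits3_cat (K : seq 'I_L) p :
  p \in splits3 K -> p.1.1 ++ p.1.2 ++ p.2 = K.
Proof.
case/flatten_mapP => q /mem_splits2_cat <- /mapP [r /mem_splits2_cat <- ->].
by rewrite catA.
Qed.

Lemma gen_basis_diag (g : gen) (b : basis) :
  is_diag g -> bvec_multiple b (gen_basis C g b).
Proof.
case: b => [[m1 K] m2].
case: g => [[[[[[[l1 l2] I] J] l3] l4] | [[[l1 l2] I] J]] | [[[[I J] l1] l2] | [I J]]] /=.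
- case/and3P => /eqP <- /eqP <- /eqP <-; apply: bvec_multiple_natZ.
  by case/andP => /andP [/eqP -> /eqP ->] /eqP ->; exact: bvec_multiple_bvec.
- case/andP => /eqP <- /eqP <-; apply: bvec_multiple_natZ => /eqP ->.
  apply: bvec_multiple_sum => p /mem_splits2_cat <-.
  by apply: bvec_multiple_natZ => /eqP ->; exact: bvec_multiple_bvec.
- case/andP => /eqP <- /eqP <-; apply: bvec_multiple_natZ => /eqP ->.
  apply: bvec_multiple_sum => p /mem_splits2_cat <-.
  by apply: bvec_multiple_natZ => /eqP ->; exact: bvec_multiple_bvec.
- move=> /eqP <-; apply: bvec_multiple_sum => p /mem_splits3_cat <-.
  by apply: bvec_multiple_natZ => /eqP ->; exact: bvec_multiple_bvec.
Qed.

Lemma mcoeff_gen_basis_offdiag (g : gen) (b : basis) :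
  ~~ is_diag g -> (gen_basis C g b)@_b = 0.
Proof.
case: b => [[m1 K] m2].
case: g => [[[[[[[l1 l2] I] J] l3] l4] | [[[l1 l2] I] J]] | [[[[I J] l1] l2] | [I J]]] /= ndiag.
- apply: mcoeff_natZ_eq0 => /andP [/andP [/eqP -> /eqP ->] /eqP ->].
  by apply: mcoeff_bvec_neq; rewrite !xpair_eqE -andbA.
- apply: mcoeff_natZ_eq0 => /eqP ->; apply: mcoeff_sum_eq0 => p /mem_splits2_cat <- _.
  apply: mcoeff_natZ_eq0 => /eqP ->; apply: mcoeff_bvec_neq; apply: contra ndiag.
  by rewrite !xpair_eqE => /andP [/andP [-> /eqP /catIs ->] _]; rewrite eqxx.
- apply: mcoeff_natZ_eq0 => /eqP ->; apply: mcoeff_sum_eq0 => p /mem_splits2_cat <- _.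
  apply: mcoeff_natZ_eq0 => /eqP ->; apply: mcoeff_bvec_neq; apply: contra ndiag.
  by rewrite !xpair_eqE => /andP [/andP [_ /eqP /catsI ->] ->]; rewrite eqxx.
- apply: mcoeff_sum_eq0 => p /mem_splits3_cat <- _.
  apply: mcoeff_natZ_eq0 => /eqP ->; apply: mcoeff_bvec_neq; apply: contra ndiag.
  by rewrite !xpair_eqE => /andP [/andP [_ /eqP /catsI /catIs ->] _].
Qed.

Lemma diagonal_comb (s : seq (C * gen)) :
  all (@is_diag L LF) (map snd s) -> diagonal (comb s).
Proof.
move=> ds b; apply: bvec_multiple_sum => x xs; apply: bvec_multipleZ.
by rewrite act_bvec; apply: gen_basis_diag; apply: (allP ds); exact: map_f.
Qed.

Lemma all_is_diag_filter (s : seq (C * gen)) :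
  all (@is_diag L LF) (map snd [seq x <- s | is_diag x.2]).
Proof. by rewrite all_map; apply/allP => x; rewrite mem_filter => /andP []. Qed.

Lemma mcoeff_comb_diag (s : seq (C * gen)) b :
  (comb s (bvec b))@_b = (comb [seq x <- s | is_diag x.2] (bvec b))@_b.
Proof.
rewrite /comb big_filter (bigID (fun x => is_diag x.2)) /= mcoeffD.
rewrite [X in _ + X]mcoeff_sum_eq0 ?addr0 // => x _ ndiag.
by rewrite mcoeffZ act_bvec mcoeff_gen_basis_offdiag ?mulr0.
Qed.

Lemma comb_diag_part (s : seq (C * gen)) :
  diagonal (comb s) -> comb s =1 comb [seq x <- s | is_diag x.2].
Proof.
move=> ds; apply: comb_bvec_eq => b.
rewrite (bvec_multipleE (ds b)).
rewrite (bvec_multipleE (diagonal_comb (all_is_diag_filter s) b)).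
by rewrite mcoeff_comb_diag.
Qed.

Lemma inG00_inG (A : To -> To) : inG00 A -> inG A.
Proof. by case=> s [_ As]; exists s. Qed.

Lemma inG00_diagonal (A : To -> To) : inG00 A -> diagonal A.
Proof. by case=> s [ds As] b; rewrite As; exact: diagonal_comb. Qed.

Lemma bracket_inG00_eq0 (A B : To -> To) :
  inG00 A -> inG00 B -> forall v, bracket A B v = 0.
Proof.
case=> s [ds As] [t [dt Bt]] v; rewrite /bracket !As !Bt.
apply/eqP; rewrite subr_eq0; apply/eqP.
exact: diagonal_comm (diagonal_comb ds) (diagonal_comb dt) v.
Qed.

Lemma inG00_bracket (A B : To -> To) :
  inG00 A -> inG00 B -> inG00 (bracket A B).
Proof.
by move=> A00 B00; exists [::]; split=> // v; rewrite comb_nil bracket_inG00_eq0.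
Qed.

Definition proj_gen (b : basis) : gen :=
  inl (inl (b.1.1, b.1.1, b.1.2, b.1.2, b.2, b.2)).

Lemma act_proj_gen b w : act (proj_gen b) w = w@_b *: bvec b.
Proof.
have e k : gen_basis C (proj_gen b) k = (k == b)%:R *: bvec b.
  by case: k b => [[? ?] ?] [[? ?] ?]; rewrite /= !xpair_eqE.
rewrite /act (extendEw _ (fsubsetU1 b (msupp w))).
rewrite (bigD1_seq b) ?fset1U1 ?fset_uniq //= e eqxx scale1r big1 ?addr0 // => k.
by move=> /negbTE nkb; rewrite e nkb scale0r scaler0.
Qed.

Lemma act_proj_gen_bvec b : act (proj_gen b) (bvec b) = bvec b.
Proof. by rewrite act_proj_gen mcoeff_bvec eqxx scale1r. Qed.

Lemma inG00_proj_gen b : inG00 (act (proj_gen b)).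
Proof.
exists [:: (1, proj_gen b)]; split=> [|v]; first by rewrite /= !eqxx.
by rewrite /comb big_seq1 scale1r.
Qed.

Lemma diagonal_of_bracket_proj (A : To -> To) :
  (forall b, diagonal (bracket A (act (proj_gen b)))) -> diagonal A.
Proof.
move=> dAP b; exists (A (bvec b))@_b; apply/eqP; rewrite -subr_eq0.
have := bvec_multipleE (dAP b b).
rewrite /bracket act_proj_gen_bvec act_proj_gen => ->.
by rewrite mcoeffB mcoeffZ_bvec subrr scale0r.
Qed.

Lemma inG00_normalizer (A : To -> To) :
  inG A -> (forall B, inG00 B -> inG00 (bracket A B)) -> inG00 A.
Proof.
case=> s As nA; exists [seq x <- s | is_diag x.2]; split=> [|v].
  exact: all_is_diag_filter.
have dA : diagonal A.
  by apply: diagonal_of_bracket_proj => b; apply/inG00_diagonal/nA/inG00_proj_gen.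
rewrite As; apply: comb_diag_part => b; rewrite -As; exact: dA.
Qed.

Lemma sum_splits2_nil_prefix (F : seq 'I_L -> To) K :
  \sum_(p <- splits2 K) (p.1 == [::])%:R *: F p.2 = F K.
Proof.
rewrite big_map big_cons take0 drop0 eqxx scale1r big1_seq ?addr0 // => n.
rewrite mem_iota => /andP [_ /andP [n_gt0 n_le]].
have -> : (take n K == [::]) = false.
  by apply/negbTE; rewrite -size_eq0 size_takel -?lt0n // -ltnS -add1n.
exact: scale0r.
Qed.

Lemma sum_splits2_nil_suffix (F : seq 'I_L -> To) K :
  \sum_(p <- splits2 K) (p.2 == [::])%:R *: F p.1 = F K.
Proof.
rewrite big_map -addn1 iotaD big_cat big_seq1 /= take_size drop_size eqxx scale1r.
rewrite big1_seq ?add0r // => n; rewrite mem_iota => /andP [_ /andP [_ n_lt]].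
have -> : (drop n K == [::]) = false.
  by apply/negbTE; rewrite -size_eq0 size_drop -lt0n subn_gt0.
exact: scale0r.
Qed.

Lemma sum_flavour_delta (m : 'I_LF) (w : To) :
  \sum_(l <- enum 'I_LF) (m == l)%:R *: w = w.
Proof.
rewrite (bigD1_seq m) ?mem_enum ?enum_uniq //= eqxx scale1r big1 ?addr0 // => l.
by rewrite eq_sym => /negbTE ->; rewrite scale0r.
Qed.

Definition lflavour_gen (l : 'I_LF) : gen := inl (inr (l, l, [::], [::])).
Definition rflavour_gen (l : 'I_LF) : gen := inr (inl ([::], [::], l, l)).

(* Both sides are rewritten separately: unifying two distinct vectors of
   {malg _} unfolds the underlying finitely supported functions, which is
   prohibitively slow. *)
Lemma act_lflavour_gen l m1 K m2 :
  act (lflavour_gen l) (bvec (m1, K, m2)) = (m1 == l)%:R *: bvec (m1, K, m2).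
Proof.
rewrite act_bvec /= (sum_splits2_nil_prefix (fun K' => bvec (l, K', m2))).
by case: eqP => [-> //|_]; rewrite [LHS]scale0r [RHS]scale0r.
Qed.

Lemma act_rflavour_gen l m1 K m2 :
  act (rflavour_gen l) (bvec (m1, K, m2)) = (m2 == l)%:R *: bvec (m1, K, m2).
Proof.
rewrite act_bvec /=.
rewrite (sum_splits2_nil_suffix (fun K' => bvec (m1, K' ++ [::], l))) cats0.
by case: eqP => [-> //|_]; rewrite [LHS]scale0r [RHS]scale0r.
Qed.

Definition flavour_relation : seq (C * gen) :=
  [seq (1, lflavour_gen l) | l <- enum 'I_LF] ++
  [seq (-1, rflavour_gen l) | l <- enum 'I_LF].

Lemma comb_flavour_relation : comb flavour_relation =1 comb [::].
Proof.
apply: comb_bvec_eq => -[[m1 K] m2].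
rewrite /flavour_relation comb_cat /comb big_nil !big_map -enumT.
rewrite [X in X + _](eq_bigr (fun l => (m1 == l)%:R *: bvec (m1, K, m2))).
  rewrite [X in _ + X](eq_bigr (fun l => - ((m2 == l)%:R *: bvec (m1, K, m2)))).
    by rewrite sumrN [X in X - _]sum_flavour_delta [X in _ - X]sum_flavour_delta subrr.
  by move=> l _; rewrite scaleN1r act_rflavour_gen.
by move=> l _; rewrite scale1r act_lflavour_gen.
Qed.

Lemma flavour_relation_nontrivial : (0 < LF)%N ->
  [/\ uniq (map snd flavour_relation),
      all (@is_diag L LF) (map snd flavour_relation)
    & has (fun x => x.1 != 0) flavour_relation].
Proof.
move=> LF_gt0; have -> : map snd flavour_relation =
    map lflavour_gen (enum 'I_LF) ++ map rflavour_gen (enum 'I_LF).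
  by rewrite map_cat -!map_comp.
split.
- have lgen_inj : injective lflavour_gen by move=> l l' [].
  have rgen_inj : injective rflavour_gen by move=> l l' [].
  rewrite cat_uniq (map_inj_uniq lgen_inj) (map_inj_uniq rgen_inj) enum_uniq andbT.
  by apply/hasPn => _ /mapP [l _ ->]; apply/negP => /mapP [].
- by rewrite all_cat !all_map; apply/andP; split; apply/allP => l _ /=; rewrite !eqxx.
- apply/hasP; exists (1, lflavour_gen (Ordinal LF_gt0)); last exact: oner_neq0.
  by rewrite mem_cat map_f ?mem_enum.
Qed.

End OpenStringOperators.

Theorem proposition3 (R : realType) (L LF : nat) (HL : (0 < L)%N) (HLF : (0 < LF)%N) :
  (* G^{00} is a Lie subalgebra of hat G_{L,LF} *)
  (forall A, @inG00 R[i] L LF A -> @inG R[i] L LF A) /\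
  (forall A B, @inG00 R[i] L LF A -> @inG00 R[i] L LF B ->
     @inG00 R[i] L LF (@bracket R[i] L LF A B)) /\
  (* G^{00} is nilpotent *)
  (exists n : nat, forall x : nat -> To R[i] L LF -> To R[i] L LF,
      (forall k, @inG00 R[i] L LF (x k)) ->
      forall v, @nested_bracket R[i] L LF n x v = 0) /\
  (* G^{00} equals its normalizer in hat G_{L,LF} *)
  (forall A : To R[i] L LF -> To R[i] L LF,
      (@inG R[i] L LF A /\
       forall B, @inG00 R[i] L LF B -> @inG00 R[i] L LF (@bracket R[i] L LF A B))
      <-> @inG00 R[i] L LF A) /\
  (* the spanning operators of G^{00} are linearly dependent *)
  (exists s : seq (R[i] * gen L LF),
      [/\ uniq (map snd s), all (@is_diag L LF) (map snd s),
          has (fun x => x.1 != 0) s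
        & forall v, @comb R[i] L LF s v = 0]).
Proof.
split; first exact: inG00_inG.
split; first exact: inG00_bracket.
split; first by exists 1%N => x x00 v; exact: bracket_inG00_eq0 (x00 1%N) (x00 0%N) v.
split=> [A|].
  split=> [[AG nA] | A00]; first exact: inG00_normalizer.
  by split=> [|B B00]; [exact: inG00_inG | exact: inG00_bracket].
exists (flavour_relation R[i] L LF).
have [rel_uniq rel_diag rel_nz] := flavour_relation_nontrivial R[i] L HLF.
by split=> // v; rewrite comb_flavour_relation comb_nil.
Qed.
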